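(* Let $(P,H,\phi)$ be a host-parasite triple and let $\Psi=\{\psi_1,\dots,\psi_l\}\subseteq\mathcal R(P,H,\phi)$ with $l\ge 1$. Define $\psi_{med}=\psi^{\Psi}_{med}:V(P)\to V(H)$ by letting, for each $v\in V(P)$, $\psi_{med}(v)$ be the element $w\in A(v)$ with $d_H(m(v),w)=zmed(n_1,\dots,n_l)$, where $n_i=d_H(m(v),\psi_i(v))$ for $1\le i\le l$. Then $\psi_{med}\in\mathcal R(P,H,\phi)$.
   Context: A phylogenetic tree $T$ is a finite rooted tree with root $\rho_T$ (indegree $0$, outdegree $2$), in which every vertex other than the root and the leaves has indegree $1$ and outdegree $2$; $V(T)$ is its vertex set, $L(T)$ its leaf set, $V^o(T)=V(T)-L(T)$. $x\succeq_T y$ means $x$ lies on the path from $\rho_T$ to $y$ (i.e. $x$ is an ancestor of $y$ or $x=y$). For $L\subseteq L(T)$ with $|L|\ge 2$, $lca_T(L)$ is the lowest vertex above every element of $L$; if $L=\{x\}$ then $lca_T(L)=x$. $d_T(v,w)$ is the number of edges on the (undirected) path in $T$ between $v$ and $w$. A host-parasite triple $(P,H,\phi)$ consists of two phylogenetic trees $P,H$ and a map $\phi:L(P)\to L(H)$. A reconciliation map is a map $\psi:V(P)\to V(H)$ such that (i) $\psi$ restricted to $L(P)$ equals $\phi$, and (ii) for every $v\in V^o(P)$ and every child $v'$ of $v$, $\psi(v)\succeq_H\psi(v')$; $\mathcal R(P,H,\phi)$ denotes the set of all reconciliation maps. For $v\in V(P)$ let $m(v)=lca_H(\{\phi(x):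 x\in L(P),\ v\succeq_P x\})$ and $A(v)=\{w\in V(H): \rho_H\succeq_H w\succeq_H m(v)\}$ (the vertices on the path from $m(v)$ up to $\rho_H$). Every reconciliation $\psi$ satisfies $\psi(v)\in A(v)$. For a finite multiset $A$ of real numbers, $med(A)$ is its median (the middle element when ordered; for even cardinality, the average of the two middle elements). For a real $r$, $[r]$ is the integer nearest to $r$, and the larger of the two if there are two nearest integers. For a multiset $A=\{n_1,\dots,n_m\}$ of integers, $zmed(n_1,\dots,n_m)=zmed(A)=[med(A)]$. *)

From mathcomp Require Import all_boot all_order all_algebra.
Set Implicit Arguments. Unset Strict Implicit. Unset Printing Implicit Defensive.
Import Order.TTheory GRing.Theory Num.Theory.

(* A rooted tree on a finite vertex type V is given by its root r and a
   parent map par with par r = r. *)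

Definition children (V : finType) (r : V) (par : V -> V) (v : V) : {set V} :=
  [set w | (w != r) && (par w == v)].

Definition is_leaf (V : finType) (r : V) (par : V -> V) (v : V) : bool :=
  children r par v == set0.

(* phylogenetic tree: every vertex reaches the root, root has outdegree 2,
   every other vertex has outdegree 0 or 2 (indegree 1 is built in). *)
Definition is_phylo_tree (V : finType) (r : V) (par : V -> V) : Prop :=
  [/\ par r = r,
      (forall v, exists n, iter n par v = r),
      #|children r par r| = 2
    & (forall v, v != r -> #|children r par v| = 0 \/ #|children r par v| = 2)].

(* anc par x y  <->  x >=_T y  (x on the path from the root to y) *)
Definition anc (V : finType) (par : V -> V) (x y : V) : Prop :=
  exists n, iter n par y = x.

Definition is_lca (V : finType) (par : V -> V) (L : V -> Prop) (w : V) : Prop :=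
  (forall x, L x -> anc par w x) /\
  (forall u, (forall x, L x -> anc par u x) -> anc par u w).

(* number of edges on the undirected path between v and w: the minimal a + b
   such that the a-th ancestor of v equals the b-th ancestor of w
   (depths are < #|V|, so the search range suffices). *)
Definition tdist (V : finType) (par : V -> V) (v w : V) : nat :=
  \big[minn/(#|V|.*2)]_(a < #|V|.+1)
    \big[minn/(#|V|.*2)]_(b < #|V|.+1 | iter a par v == iter b par w) (a + b)%N.

Local Open Scope ring_scope.

Definition med (s : seq nat) : rat :=
  let t := sort leq s in
  let k := size t in
  if odd k then (nth 0%N t k./2)%:R
  else ((nth 0%N t k./2.-1)%:R + (nth 0%N t k./2)%:R) / 2.

(* nearest integer, the larger one in case of a tie *)
Definition nearest_int (q : rat) : int := Num.floor (q + 1 / 2).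

Definition zmed (s : seq nat) : int := nearest_int (med s).

Definition is_reconciliation (VP VH : finType) (rP : VP) (parP : VP -> VP)
    (rH : VH) (parH : VH -> VH) (phi psi : VP -> VH) : Prop :=
  (forall x, is_leaf rP parP x -> psi x = phi x) /\
  (forall v v', ~~ is_leaf rP parP v -> v' \in children rP parP v ->
     anc parH (psi v) (psi v')).

Definition is_m (VP VH : finType) (rP : VP) (parP : VP -> VP) (parH : VH -> VH)
    (phi : VP -> VH) (v : VP) (m : VH) : Prop :=
  is_lca parH (fun h => exists x, [/\ is_leaf rP parP x, anc parP v x & phi x = h]) m.

Definition med_spec (VP VH : finType) (rP : VP) (parP : VP -> VP)
    (parH : VH -> VH) (phi : VP -> VH) (l : nat) (psis : 'I_l -> VP -> VH)
    (f : VP -> VH) : Prop :=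
  forall v m, is_m rP parP parH phi v m ->
    anc parH (f v) m /\
    (tdist parH m (f v))%:Z = zmed [seq tdist parH m (psis i v) | i <- enum 'I_l].

From mathcomp Require Import all_boot all_order all_algebra.
From mathcomp Require Import zify lra.
From Stdlib Require Import Classical_Prop IndefiniteDescription Wf_nat.
Import Order.TTheory GRing.Theory Num.Theory.
Set Implicit Arguments. Unset Strict Implicit. Unset Printing Implicit Defensive.

(* All ψ_i(v) lie on the chain of ancestors of m(v) (a reconciliation maps v
   above φ of every leaf below v), so each is determined by its height above
   m(v), and ψ_med(v) is the vertex at the rounded median height, which lies
   between 0 and the depth of m(v).  At a leaf x every height above
   m(x) = φ(x) is 0, so ψ_med(x) = φ(x).  For an edge v → v', m(v) is d steps
   above m(v') and ψ_i(v) is above ψ_i(v'), so the height of ψ_i(v') above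
   m(v') is at most d plus the height of ψ_i(v) above m(v).  The rounded
   median is monotone and commutes with adding d, hence ψ_med(v') is no higher
   than ψ_med(v) on the chain above m(v'). *)

Section RootedTree.
Variables (V : finType) (r : V) (par : V -> V).
Hypotheses (par_root : par r = r) (reach_root : forall v, exists n, iter n par v = r).

Fact reach_rootb x : exists n, iter n par x == r.
Proof. by have [n reach_n] := reach_root x; exists n; apply/eqP. Qed.

Definition depth x := ex_minn (reach_rootb x).

Lemma iter_par_root n : iter n par r = r.
Proof. by elim: n => //= n ->. Qed.

Lemma iter_depth x : iter (depth x) par x = r.
Proof. by rewrite /depth; case: ex_minnP => n /eqP. Qed.

Lemma depth_min x n : iter n par x = r -> depth x <= n.
Proof. by rewrite /depth; case: ex_minnP => m _ min_m /eqP /min_m. Qed.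

Lemma iter_ge_depth x n : depth x <= n -> iter n par x = r.
Proof. by move/subnK <-; rewrite iterD iter_depth iter_par_root. Qed.

Lemma periodic_root z n : 0 < n -> iter n par z = z -> z = r.
Proof.
move=> n_gt0 per_z; have per_zk k : iter (k * n) par z = z.
  by elim: k => //= k IH; rewrite mulSn iterD IH per_z.
by rewrite -(per_zk (depth z)) iter_ge_depth // leq_pmulr.
Qed.

Lemma iter_depth_inj x i j :
  i <= depth x -> j <= depth x -> iter i par x = iter j par x -> i = j.
Proof.
wlog le_ij : i j / i <= j => [W hi hj E|hi hj E].
  by case: (leqP i j) => [/W|/ltnW /W] ->.
apply/eqP; rewrite eqn_leq le_ij leqNgt; apply/negP => lt_ij.
have : iter (j - i) par (iter i par x) = iter i par x by rewrite -iterD subnK.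
by move/periodic_root; rewrite subn_gt0 => /(_ lt_ij) /depth_min; lia.
Qed.

Lemma iter_minn_depth x n : iter n par x = iter (minn n (depth x)) par x.
Proof.
by case: (leqP (depth x) n) => // le_dn; rewrite iter_depth iter_ge_depth.
Qed.

Lemma depth_lt_card x : depth x < #|V|.
Proof.
have inj : injective (fun i : 'I_(depth x).+1 => iter i par x).
  by move=> i j /iter_depth_inj E; apply/val_inj/E; rewrite -ltnS.
by have := leq_card _ inj; rewrite card_ord.
Qed.

Lemma depth_iter x k : k <= depth x -> depth (iter k par x) = depth x - k.
Proof.
move=> le_k; apply/anti_leq/andP; split.
  by apply: depth_min; rewrite -iterD subnK // iter_depth.
by rewrite leq_subLR addnC; apply: depth_min; rewrite iterD iter_depth.
Qed.

Lemma depth_par_lt c : c != r -> depth (par c) < depth c.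
Proof.
move=> c_neq_r; have depth_gt0 : 0 < depth c.
  by rewrite lt0n; apply: contra_neq c_neq_r => d0; rewrite -(iter_depth c) d0.
by rewrite -[par c]/(iter 1 par c) depth_iter //; lia.
Qed.

Lemma anc_refl x : anc par x x.
Proof. by exists 0. Qed.

Lemma anc_trans x y z : anc par x y -> anc par y z -> anc par x z.
Proof. by case=> n <- [m <-]; exists (n + m); rewrite iterD. Qed.

Lemma anc_iter k x : anc par (iter k par x) x.
Proof. by exists k. Qed.

Lemma ancP u x : anc par u x -> exists2 k, k <= depth x & u = iter k par x.
Proof. by case=> n <-; exists (minn n (depth x)); rewrite ?geq_minr -?iter_minn_depth. Qed.

Lemma anc_antisym x y : anc par x y -> anc par y x -> x = y.
Proof.
case=> a <- [b]; rewrite -iterD; case: (posnP (b + a)) => [/eqP|ba_gt0 per_y].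
  by rewrite addn_eq0 => /andP [_ /eqP ->].
by rewrite (periodic_root ba_gt0 per_y) iter_par_root.
Qed.

Lemma tdist_iter x k : k <= depth x -> tdist par x (iter k par x) = k.
Proof.
move=> le_k; have lt_k : k < #|V|.+1 by have := depth_lt_card x; lia.
apply/anti_leq/andP; split.
  apply: leq_trans (@bigmin_le_cond _ nat _ _ (Ordinal lt_k) xpredT _ isT) _.
  by apply: leq_trans (@bigmin_le_cond _ nat _ _ ord0 _ _ _) _; rewrite /= ?eqxx ?addn0.
apply/(@bigmin_geP _ nat); split=> [|a _]; first by lia.
apply/(@bigmin_geP _ nat); split=> [|b /eqP]; first by lia.
rewrite -iterD (iter_minn_depth _ a) (iter_minn_depth _ (b + k)).
by move/iter_depth_inj; rewrite !geq_minr => /(_ isT isT); lia.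
Qed.

Lemma iter_tdist u x : anc par u x -> iter (tdist par x u) par x = u.
Proof. by case/ancP=> k le_k ->; rewrite tdist_iter. Qed.

Lemma tdistxx x : tdist par x x = 0.
Proof.
apply/eqP; rewrite -leqn0.
apply: leq_trans (@bigmin_le_cond _ nat _ _ ord0 xpredT _ isT) _.
by apply: leq_trans (@bigmin_le_cond _ nat _ _ ord0 _ _ _) _; rewrite /= ?eqxx.
Qed.

Lemma tdist_le_depth u x : anc par u x -> tdist par x u <= depth x.
Proof. by case/ancP=> k le_k ->; rewrite tdist_iter. Qed.

Lemma tdistD u a b :
  anc par u a -> anc par a b -> tdist par b u = tdist par b a + tdist par a u.
Proof.
case/ancP=> j le_j -> /ancP [i le_i a_eq]; rewrite a_eq depth_iter // in le_j *.
rewrite (@tdist_iter (iter i par b) j) ?depth_iter // -iterD !tdist_iter //; lia.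
Qed.

Lemma anc_of_tdist_le a b x :
  anc par a x -> anc par b x -> tdist par x b <= tdist par x a -> anc par a b.
Proof.
case/ancP=> i le_i -> /ancP [j le_j ->]; rewrite !tdist_iter // => le_ji.
by exists (i - j); rewrite -iterD subnK.
Qed.

Lemma lca_exists (L : V -> Prop) h0 : L h0 -> exists m, is_lca par L m.
Proof.
move=> L_h0; pose above k := forall h, L h -> anc par (iter k par h0) h.
have [k [[above_k min_k] _]] : has_unique_least_element le above.
  apply: dec_inh_nat_subset_has_unique_least_element => [n|]; first exact: classic.
  by exists (depth h0) => h _; rewrite iter_depth; exists (depth h); rewrite iter_depth.
exists (iter k par h0); split=> // u above_u.
have [j le_j u_eq] := ancP (above_u h0 L_h0).
have /ssrnat.leP le_kj : (k <= j)%coq_nat.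
  by apply: min_k => h; rewrite -u_eq; apply: above_u.
by rewrite u_eq; exists (j - k); rewrite -iterD subnK.
Qed.

Lemma lca_unique (L : V -> Prop) m1 m2 :
  is_lca par L m1 -> is_lca par L m2 -> m1 = m2.
Proof. by case=> above1 least1 [above2 least2]; apply: anc_antisym; auto. Qed.

End RootedTree.

Lemma sorted_nth_leE (s : seq nat) k y : sorted leq s -> k < size s ->
  (nth 0 s k <= y) = (k < count (leq^~ y) s).
Proof.
elim: s k => // x s IH k /= sorted_xs lt_k.
have sorted_s := path_sorted sorted_xs.
have count0 : ~~ (x <= y) -> count (leq^~ y) s = 0.
  move=> gt_xy; apply/eqP; rewrite -leqn0 leqNgt -has_count; apply/hasPn => z z_s.
  exact: contra (leq_trans (allP (order_path_min leq_trans sorted_xs) z z_s)) gt_xy.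
case: k lt_k => [|k] lt_k /=; have [le_xy|gt_xy] := boolP (x <= y);
  by rewrite /= ?IH ?(count0 gt_xy).
Qed.

Lemma nth_sort_le (s t : seq nat) k : size s = size t ->
  (forall y, count (leq^~ y) t <= count (leq^~ y) s) ->
  nth 0 (sort leq s) k <= nth 0 (sort leq t) k.
Proof.
move=> size_st count_ts; case: (ltnP k (size s)) => lt_k; last first.
  by rewrite nth_default // size_sort.
have sorted_s := sort_sorted leq_total s; have sorted_t := sort_sorted leq_total t.
rewrite sorted_nth_leE ?size_sort // (permP (permEl (perm_sort leq s))).
apply: leq_trans (count_ts _); rewrite -(permP (permEl (perm_sort leq t))).
by rewrite -sorted_nth_leE ?size_sort -?size_st.
Qed.

Section Median.
Local Open Scope ring_scope.

Lemma med_le_map (I : Type) (s : seq I) (F G : I -> nat) :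
  (forall i, (F i <= G i)%N) -> med [seq F i | i <- s] <= med [seq G i | i <- s].
Proof.
move=> le_FG; rewrite /med !size_sort !size_map.
have le_nth k :
    (nth 0 (sort leq [seq F i | i <- s]) k <= nth 0 (sort leq [seq G i | i <- s]) k)%N.
  apply: nth_sort_le; rewrite ?size_map // => y; rewrite !count_map.
  by apply: sub_count => i /= le_Gy; apply: leq_trans le_Gy.
case: ifP => _; first by rewrite ler_nat.
by rewrite ler_pM2r ?invr_gt0 // lerD ?ler_nat.
Qed.

Lemma med_addn (s : seq nat) d : (0 < size s)%N ->
  med [seq x + d | x <- s]%N = med s + d%:R.
Proof.
move=> s_gt0; rewrite /med.
have -> : sort leq [seq x + d | x <- s]%N = [seq x + d | x <- sort leq s]%N.
  apply: homo_sort_map => [a b|b a c||a b] /=; rewrite ?leq_add2r //.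
  - exact: anti_leq.
  - exact: leq_trans.
rewrite size_map size_sort.
have lt_half : ((size s)./2 < size (sort leq s))%N by rewrite size_sort; lia.
have lt_half1 : ((size s)./2.-1 < size (sort leq s))%N by lia.
rewrite !(nth_map 0%N) // !natrD; case: ifP => _ //.
set a := (nth _ _ _)%:R; set b := (nth _ _ _)%:R; lra.
Qed.

Lemma med_bounds (s : seq nat) B : all (leq^~ B) s -> 0 <= med s <= B%:R.
Proof.
move=> le_sB; have le_nth k : (nth 0 (sort leq s) k <= B)%N.
  case: (ltnP k (size (sort leq s))) => lt_k; last by rewrite nth_default.
  by apply: (allP le_sB); rewrite -(mem_sort leq) mem_nth.
rewrite /med; case: ifP => _; first by rewrite ler0n ler_nat le_nth.
have := le_nth (size (sort leq s))./2.-1; have := le_nth (size (sort leq s))./2.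
rewrite -!(ler_nat rat); set a := (nth _ _ _)%:R; set b := (nth _ _ _)%:R.
have a_ge0 : 0 <= a by []; have b_ge0 : 0 <= b by [].
move=> le_aB le_bB; apply/andP; split; lra.
Qed.

Lemma zmed_le_map (I : Type) (s : seq I) (F G : I -> nat) :
  (forall i, (F i <= G i)%N) -> zmed [seq F i | i <- s] <= zmed [seq G i | i <- s].
Proof. by move=> le_FG; apply: le_floor; rewrite lerD2r; apply: med_le_map. Qed.

Lemma zmed_addn (s : seq nat) d : (0 < size s)%N ->
  zmed [seq x + d | x <- s]%N = zmed s + d%:Z.
Proof.
move=> s_gt0; rewrite /zmed /nearest_int med_addn // addrAC floorDrz ?natr_int //.
by rewrite (intrKfloor d%:Z).
Qed.

Lemma zmed_bounds (s : seq nat) B : all (leq^~ B) s -> 0 <= zmed s <= B%:Z.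
Proof.
case/med_bounds/andP => med_ge0 med_leB; rewrite /zmed /nearest_int floor_ge0.
rewrite -ltzD1 floor_lt_int intrD /=; apply/andP; split; lra.
Qed.

End Median.

Section Reconciliation.
Variables (VP VH : finType) (rP : VP) (parP : VP -> VP).
Variables (rH : VH) (parH : VH -> VH) (phi : VP -> VH).
Hypotheses (parP_root : parP rP = rP) (reachP : forall v, exists n, iter n parP v = rP).
Hypothesis rootP_children : #|children rP parP rP| = 2.
Hypotheses (parH_root : parH rH = rH) (reachH : forall v, exists n, iter n parH v = rH).

Lemma rootP_not_leaf : ~~ is_leaf rP parP rP.
Proof. by apply/eqP => no_children; move: rootP_children; rewrite no_children cards0. Qed.

Lemma leaf_anc_eq x y : is_leaf rP parP x -> anc parP x y -> y = x.
Proof.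
move=> leaf_x [[|n] //= par_c]; set c := iter n parP y in par_c.
have [c_root|c_neq_r] := eqVneq c rP.
  by move: leaf_x rootP_not_leaf; rewrite -par_c c_root parP_root => ->.
have : c \in children rP parP x by rewrite inE c_neq_r par_c eqxx.
by move/eqP: leaf_x => ->; rewrite inE.
Qed.

Lemma exists_leaf_below v : exists2 x, is_leaf rP parP x & anc parP v x.
Proof.
have [n] := ubnP (#|VP| - depth reachP v); elim: n v => // n IH v lt_v.
have [leaf_v|] := boolP (is_leaf rP parP v); first by exists v; last exact: anc_refl.
case/set0Pn => c; rewrite inE => /andP [c_neq_r /eqP par_c].
have [|x leaf_x anc_cx] := IH c.
  have := depth_par_lt reachP c_neq_r; have := depth_lt_card parP_root reachP c.
  by rewrite par_c; lia.
by exists x => //; apply: anc_trans anc_cx; rewrite -par_c; exact: (anc_iter _ 1).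
Qed.

Lemma reconciliation_anc psi v w : is_reconciliation rP parP rH parH phi psi ->
  anc parP v w -> anc parH (psi v) (psi w).
Proof.
case=> _ psi_edge [n <-]; elim: n => [|n IH]; first exact: anc_refl.
apply: (anc_trans _ IH); rewrite iterS; set c := iter n parP w.
have [->|c_neq_r] := eqVneq c rP; first by rewrite parP_root; apply: anc_refl.
have c_child : c \in children rP parP (parP c) by rewrite inE c_neq_r eqxx.
by apply: (psi_edge _ _ _ c_child); apply/set0Pn; exists c.
Qed.

Lemma reconciliation_anc_m psi v m : is_reconciliation rP parP rH parH phi psi ->
  is_m rP parP parH phi v m -> anc parH (psi v) m.
Proof.
move=> psi_rec [_ m_least]; apply: m_least => _ [x [leaf_x anc_vx <-]].
by rewrite -(psi_rec.1 x leaf_x); apply: reconciliation_anc psi_rec anc_vx.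
Qed.

Lemma exists_m v : exists m, is_m rP parP parH phi v m.
Proof.
have [x leaf_x anc_vx] := exists_leaf_below v.
by apply: (lca_exists parH_root reachH (h0 := phi x)); exists x.
Qed.

Lemma is_m_leaf x : is_leaf rP parP x -> is_m rP parP parH phi x (phi x).
Proof.
move=> leaf_x; split=> [_ [y [_ /(leaf_anc_eq leaf_x) -> <-]]|u]; first exact: anc_refl.
by apply; exists x; split=> //; apply: anc_refl.
Qed.

Lemma is_m_anc v w m n : anc parP v w ->
  is_m rP parP parH phi v m -> is_m rP parP parH phi w n -> anc parH m n.
Proof.
move=> anc_vw [m_above _] [_ n_least]; apply: n_least => _ [x [leaf_x anc_wx <-]].
by apply: m_above; exists x; split=> //; apply: anc_trans anc_wx.
Qed.

Variables (l : nat) (psis : 'I_l -> VP -> VH).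
Hypotheses (l_gt0 : 0 < l) (psis_rec : forall i, is_reconciliation rP parP rH parH phi (psis i)).

Local Notation dists v m := [seq tdist parH m (psis i v) | i <- enum 'I_l].

Lemma zmed_dists_bounds v m : is_m rP parP parH phi v m ->
  (0 <= zmed (dists v m) <= (depth reachH m)%:Z)%R.
Proof.
move=> v_m; apply: zmed_bounds; apply/allP => _ /mapP [i _ ->].
exact/(tdist_le_depth parH_root reachH)/(reconciliation_anc_m (psis_rec i)).
Qed.

Lemma exists_med_spec : exists f, med_spec rP parP parH phi psis f.
Proof.
have [mf mfP] := functional_choice _ exists_m.
exists (fun v => iter `|zmed (dists v (mf v))| parH (mf v)) => v m v_m.
rewrite (lca_unique parH_root reachH (mfP v) v_m); split; first exact: anc_iter.
have /andP [zmed_ge0 zmed_le] := zmed_dists_bounds v_m.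
by rewrite tdist_iter ?gez0_abs // -lez_nat gez0_abs.
Qed.

Lemma med_spec_leaf f : med_spec rP parP parH phi psis f ->
  forall x, is_leaf rP parP x -> f x = phi x.
Proof.
move=> f_med x leaf_x; have [f_anc f_tdist] := f_med x _ (is_m_leaf leaf_x).
have dists0 : all (leq^~ 0) (dists x (phi x)).
  by apply/allP => _ /mapP [i _ ->]; rewrite ((psis_rec i).1 x leaf_x) tdistxx.
have zmed0 : zmed (dists x (phi x)) = 0%R.
  by have /andP [ge0 le0] := zmed_bounds dists0; apply/le_anti/andP.
move: f_tdist; rewrite zmed0 => -[tdist0].
by rewrite -(iter_tdist parH_root reachH f_anc) tdist0.
Qed.

Lemma med_spec_edge f : med_spec rP parP parH phi psis f ->
  forall v v', v' \in children rP parP v -> anc parH (f v) (f v').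
Proof.
move=> f_med v v'; rewrite inE => /andP [_ /eqP par_v'].
have anc_vv' : anc parP v v' by rewrite -par_v'; exact: (anc_iter _ 1).
have [m v_m] := exists_m v; have [m' v'_m'] := exists_m v'.
have anc_mm' := is_m_anc anc_vv' v_m v'_m'.
have [fv_m tdist_fv] := f_med v m v_m; have [fv'_m' tdist_fv'] := f_med v' m' v'_m'.
apply: (anc_of_tdist_le parH_root reachH (anc_trans fv_m anc_mm') fv'_m').
rewrite -lez_nat tdist_fv' (tdistD parH_root reachH fv_m anc_mm') PoszD tdist_fv addrC.
rewrite -zmed_addn; last by rewrite size_map size_enum_ord.
rewrite -map_comp; apply: zmed_le_map => i /=.
have psi_vv' := reconciliation_anc (psis_rec i) anc_vv'.
have psi_v_m := reconciliation_anc_m (psis_rec i) v_m.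
have psi_v'_m' := reconciliation_anc_m (psis_rec i) v'_m'.
rewrite addnC -(tdistD parH_root reachH psi_v_m anc_mm').
by rewrite (tdistD parH_root reachH psi_vv' psi_v'_m') leq_addr.
Qed.

End Reconciliation.

Theorem mainTheorem2 (VP VH : finType) (rP : VP) (parP : VP -> VP)
  (rH : VH) (parH : VH -> VH) (phi : VP -> VH) (l : nat)
  (psis : 'I_l -> VP -> VH) :
  is_phylo_tree rP parP -> is_phylo_tree rH parH ->
  (forall x, is_leaf rP parP x -> is_leaf rH parH (phi x)) ->
  (0 < l)%N -> injective psis ->
  (forall i, is_reconciliation rP parP rH parH phi (psis i)) ->
  (exists f, med_spec rP parP parH phi psis f) /\
  (forall f, med_spec rP parP parH phi psis f ->
     is_reconciliation rP parP rH parH phi f).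
Proof.
move=> [rootP reachP rootP_children _] [rootH reachH _ _] _ l_gt0 _ psis_rec.
split=> [|f f_med].
  exact: (exists_med_spec rootP reachP rootP_children rootH reachH psis_rec).
split=> [|v v' _].
  exact: (med_spec_leaf rootP rootP_children rootH reachH psis_rec f_med).
exact: (med_spec_edge rootP reachP rootP_children rootH reachH l_gt0 psis_rec f_med).
Qed.
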